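(* Let $R$, $G$, $*$, $\sigma$ and $\mathcal{S}$ be as in the context, and suppose $\mathcal{S}$ is anticommutative. For $x\in G$ put $c_x=x^*x^{-1}$. Then: - for every $x\in G$, $x^*=c_x x$, with $c_x\in G_*\cap\mathcal{Z}(G)$ and $c_x^2=1$; - for all $x,y\in G$, $c_{xy}=c_xc_y(x,y)$; - if $(x,y)\neq 1$, then $c_{xy}\in\{c_x,\ c_y,\ (x,y)\}$.
   Context: Throughout, $R$ is a commutative ring with unity with $\operatorname{char}(R)\neq 2$, and $\mathcal{U}(R)$ is its unit group. $G$ is a group with an involution $*$, i.e. a map $x\mapsto x^*$ with $(xy)^*=y^*x^*$ and $(x^* )^*=x$. The map $\sigma:G\to\mathcal{U}(R)$ is a nontrivial group homomorphism with kernel $N=\ker\sigma$, and it is compatible with $*$: $xx^*\in N$ for all $x\in G$. The group ring $RG$ carries the involution $\left(\sum_{x\in G}\alpha_x x\right)^{\sigma*}=\sum_{x\in G}\sigma(x)\alpha_x x^*$. Write $G_*=\{x\in G: x^*=x\}$ and $N_*=G_*\cap N$. Let $\mathcal{S}$ be the $R$-submodule of $RG$ spanned by the union of the following three sets: - $2\mathcal{S}_1=\{2x: x\in N_*\}$; - $\mathcal{S}_2=\{\alpha x: x\in G_*\setminus N,\ \alpha\in R,\ \alpha(1-\sigma(x))=0\}$; - $\mathcal{S}_3=\{x+\sigma(x)x^*: x\in G\setminus G_*\}$. $\mathcal{S}$ is called anticommutative if $ab+ba=0$ for all $a,b\in\mathcal{S}$. $\mathcal{Z}(G)$ is the center of $G$,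 and the commutator is $(x,y)=x^{-1}y^{-1}xy$. *)

From HB Require Import structures.
From mathcomp Require Import all_boot all_order all_algebra.
Set Implicit Arguments. Unset Strict Implicit. Unset Printing Implicit Defensive.
Import GRing.Theory.

Section GroupRing.
Variables (R : comNzRingType) (G : groupType).

(* An element of the group ring RG is represented by a finite formal sum
   sum_i r_i g_i, given as a list of pairs (r_i, g_i). *)
Definition grp_ring := seq (R * G).

Definition gr_coef (a : grp_ring) (g : G) : R :=
  (\sum_(p <- a | p.2 == g) p.1)%R.

Definition gr_eq (a b : grp_ring) : Prop := forall g, gr_coef a g = gr_coef b g.

Definition gr_add (a b : grp_ring) : grp_ring := a ++ b.

Definition gr_scale (r : R) (a : grp_ring) : grp_ring :=
  [seq ((r * p.1)%R, p.2) | p <- a].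

Definition gr_mul (a b : grp_ring) : grp_ring :=
  [seq ((p.1 * q.1)%R, (p.2 * q.2)%g) | p <- a, q <- b].

Definition gr_zero : grp_ring := [::].

Definition is_group_involution (star : G -> G) : Prop :=
  (forall x y : G, star (x * y)%g = (star y * star x)%g) /\
  (forall x : G, star (star x) = x).

Definition is_unit_hom (sigma : G -> R) : Prop :=
  (forall x : G, exists y : R, (sigma x * y)%R = 1%R) /\
  (forall x y : G, sigma (x * y)%g = (sigma x * sigma y)%R).

Definition in_N (sigma : G -> R) (x : G) : Prop := sigma x = 1%R.
Definition in_Gstar (star : G -> G) (x : G) : Prop := star x = x.

Definition S_gen (star : G -> G) (sigma : G -> R) (a : grp_ring) : Prop :=
  (exists x : G, in_Gstar star x /\ in_N sigma x /\ a = [:: (2%:R%R, x)]) \/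
  (exists (x : G) (alpha : R), in_Gstar star x /\ ~ in_N sigma x /\
       (alpha * (1 - sigma x))%R = 0%R /\ a = [:: (alpha, x)]) \/
  (exists x : G, ~ in_Gstar star x /\ a = [:: (1%R, x); (sigma x, star x)]).

Definition in_S (star : G -> G) (sigma : G -> R) (a : grp_ring) : Prop :=
  exists l : seq (R * grp_ring),
    (forall p, p \in l -> S_gen star sigma p.2) /\
    gr_eq a (flatten [seq gr_scale p.1 p.2 | p <- l]).

Definition S_anticommutative (star : G -> G) (sigma : G -> R) : Prop :=
  forall a b, in_S star sigma a -> in_S star sigma b ->
    gr_eq (gr_add (gr_mul a b) (gr_mul b a)) gr_zero.

End GroupRing.

Definition cx (G : groupType) (star : G -> G) (x : G) : G := (star x * x^-1)%g.

Definition in_center (G : groupType) (z : G) : Prop := forall y : G, (z * y)%g = (y * z)%g.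

From HB Require Import structures.
From mathcomp Require Import all_boot all_order all_algebra.
Set Implicit Arguments. Unset Strict Implicit. Unset Printing Implicit Defensive.
Import GRing.Theory.

(* For a non-symmetric x the element b_x = x + sigma(x) x^* lies in S, and for a symmetric s
   so does alpha s for some alpha != 0: alpha = 2 if sigma(s) = 1, alpha = 1 + sigma(s) if
   sigma(s) <> 1, -1, and alpha = 2 again if sigma(s) = -1, because the anticommutator of 2
   and b_x forces 4 = 0.  As 2 != 0 and sigma(x) is a unit, comparing single coefficients of
   the vanishing anticommutators of these elements yields in turn: x^* commutes with x and
   x^* x^* = x x, so c_x is a symmetric involution commuting with x; c_x commutes with every
   symmetric s, and (x, s) is 1 or c_x; c_x commutes with every non-symmetric y, since
   otherwise sigma(x) = -1, sigma(y) = 1 and either xy is symmetric or c_(xy) = c_y, and in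
   the latter case the same argument for the pair (x, xy) gives sigma(xy) = 1.  Once all c_x
   are central involutions, c_(xy) = c_x c_y (x, y) is a computation in G, and one more
   coefficient comparison shows that (x, y) is 1, c_x or c_y unless c_x = c_y. *)

Local Open Scope ring_scope.
Local Open Scope group_scope.

Lemma eqg_mull1 (G : groupType) (a b : G) : (a * b == b) = (a == 1).
Proof. by rewrite -{2}(mul1g b) (inj_eq (mulIg b)). Qed.

Lemma eqg_mulr1 (G : groupType) (a b : G) : (a * b == a) = (b == 1).
Proof. by rewrite -{2}(mulg1 a) (inj_eq (mulgI a)). Qed.

Lemma commute_cancel (G : groupType) (u x y : G) :
  commute u x -> commute u (x * y) -> commute u y.
Proof. by rewrite /commute => ux; rewrite mulgA ux -!mulgA => /mulgI. Qed.

Lemma commg_self_mul (G : groupType) (x y : G) : [~ x, x * y] = [~ x, y].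
Proof. by rewrite !commgEl !conjgE invgM -mulgA mulKg. Qed.

Lemma central_commg (G : groupType) (a b e x y : G) :
  in_center a -> in_center b -> in_center e -> a * a = 1 -> b * b = 1 -> e * e = 1 ->
  e * (x * y) = a * b * (y * x) -> e = a * b * [~ x, y].
Proof.
rewrite /in_center => ca cb ce aa bb ee; rewrite [x * y]commgC mulgA ce -mulgA.
have -> : a * b * (y * x) = y * x * (a * b).
  by rewrite -mulgA (cb (y * x)) mulgA (ca (y * x)) -mulgA.
move=> /mulgI ek; have -> : [~ x, y] = e * (a * b) by rewrite -ek mulgA ee mul1g.
have ab2 : a * b * (a * b) = 1 by rewrite -mulgA (mulgA b) -(ca b) -mulgA bb mulg1 aa.
by rewrite (ce (a * b)) mulgA ab2 mul1g.
Qed.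

Section AnticommutativeSymmetricElements.
Variables (R : comNzRingType) (G : groupType) (star : G -> G) (sigma : G -> R).
Hypotheses (char_not2 : (2%:R%R : R) != 0) (Hstar : is_group_involution star)
  (Hsigma : is_unit_hom sigma) (Hcompat : forall x, sigma (x * star x) = 1%R)
  (Hanti : S_anticommutative star sigma).

Lemma starM x y : star (x * y) = star y * star x. Proof. exact: Hstar.1. Qed.

Lemma starK x : star (star x) = x. Proof. exact: Hstar.2. Qed.

Lemma star1 : star 1 = 1.
Proof. by apply: (mulgI (star 1)); rewrite -starM !mulg1. Qed.

Lemma sigmaM x y : sigma (x * y) = (sigma x * sigma y)%R. Proof. exact: Hsigma.2. Qed.

Lemma sigma1 : sigma 1 = 1%R.
Proof. by have := Hcompat 1; rewrite star1 mulg1. Qed.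

Lemma sigma_regular x r : (sigma x * r = 0)%R -> r = 0.
Proof. by case: (Hsigma.1 x) => u hu h; rewrite -[r]mul1r -hu mulrAC h mul0r. Qed.

Lemma sigma_sym s : star s = s -> (sigma s * sigma s = 1)%R.
Proof. by move=> hs; rewrite -sigmaM -{2}hs Hcompat. Qed.

Lemma two_neq0 : 1%R + 1%R != 0 :> R.
Proof. by rewrite -mulr2n. Qed.

Lemma sigma_double_neq0 x : sigma x + sigma x != 0.
Proof.
apply: contra char_not2 => /eqP h.
by apply/eqP/(@sigma_regular x); rewrite mulr_natr.
Qed.

Lemma gr_coef_cons r h (l : grp_ring R G) g :
  gr_coef ((r, h) :: l) g = (if h == g then r else 0) + gr_coef l g.
Proof. by rewrite /gr_coef big_cons /=; case: eqP; rewrite ?add0r. Qed.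

Lemma gr_coef_nil g : gr_coef ([::] : grp_ring R G) g = 0.
Proof. by rewrite /gr_coef big_nil. Qed.

Lemma S_gen_in_S a : S_gen star sigma a -> in_S star sigma a.
Proof.
move=> ha; exists [:: (1%R, a)]; split=> [p|g]; first by rewrite inE => /eqP ->.
by rewrite /= cats0 /gr_coef big_map; apply: eq_bigr => p _; rewrite mul1r.
Qed.

Lemma S_two_sym s : star s = s -> sigma s = 1%R -> in_S star sigma [:: (2%:R%R, s)].
Proof. by move=> hs hN; apply: S_gen_in_S; left; exists s. Qed.

Lemma S_scaled_sym s alpha : star s = s -> sigma s != 1%R -> (alpha * (1 - sigma s) = 0)%R ->
  in_S star sigma [:: (alpha, s)].
Proof.
by move=> hs hN ha; apply: S_gen_in_S; right; left; exists s, alpha; do !split=> //; apply/eqP.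
Qed.

Lemma S_nonsym x : star x != x -> in_S star sigma [:: (1%R, x); (sigma x, star x)].
Proof. by move=> hx; apply: S_gen_in_S; right; right; exists x; split=> //; apply/eqP. Qed.

Lemma anticomm_coef a b g : in_S star sigma a -> in_S star sigma b ->
  gr_coef (gr_add (gr_mul a b) (gr_mul b a)) g = 0.
Proof. by move=> Sa Sb; rewrite (Hanti Sa Sb g) gr_coef_nil. Qed.

Lemma anticomm_coef_sym_nonsym alpha s x g :
  in_S star sigma [:: (alpha, s)] -> in_S star sigma [:: (1%R, x); (sigma x, star x)] ->
  (if s * x == g then alpha else 0) + (if s * star x == g then (alpha * sigma x)%R else 0)
  + (if x * s == g then alpha else 0) + (if star x * s == g then (alpha * sigma x)%R else 0) = 0.
Proof.
move=> Ss Sx; have := anticomm_coef g Ss Sx.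
by rewrite /= !gr_coef_cons gr_coef_nil addr0 mulr1 mul1r !addrA [(sigma x * alpha)%R]mulrC.
Qed.

Lemma anticomm_coef_nonsym x y g :
  in_S star sigma [:: (1%R, x); (sigma x, star x)] ->
  in_S star sigma [:: (1%R, y); (sigma y, star y)] ->
  (if x * y == g then 1%R else 0) + (if x * star y == g then sigma y else 0)
  + (if star x * y == g then sigma x else 0)
  + (if star x * star y == g then (sigma x * sigma y)%R else 0)
  + (if y * x == g then 1%R else 0) + (if y * star x == g then sigma x else 0)
  + (if star y * x == g then sigma y else 0)
  + (if star y * star x == g then (sigma x * sigma y)%R else 0) = 0.
Proof.
move=> Sx Sy; have := anticomm_coef g Sx Sy.
by rewrite /= !gr_coef_cons gr_coef_nil addr0 !mulr1 !mul1r !addrA [(sigma y * sigma x)%R]mulrC.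
Qed.

Lemma four_eq0 x : star x != x -> 2%:R + 2%:R = 0 :> R.
Proof.
move=> hx; have := anticomm_coef_sym_nonsym x (S_two_sym star1 sigma1) (S_nonsym hx).
by rewrite !mul1g !mulg1 eqxx (negbTE hx) !addr0.
Qed.

Lemma sym_scaled_in_S x s : star x != x -> star s = s ->
  exists2 alpha : R, alpha != 0 & in_S star sigma [:: (alpha, s)].
Proof.
move=> hx hs; have [hN | hN] := eqVneq (sigma s) 1%R.
  by exists 2%:R; [exact: char_not2 | exact: S_two_sym].
have [hm1 | hm1] := eqVneq (1 + sigma s) 0.
  exists 2%:R; first exact: char_not2.
  apply: S_scaled_sym => //.
  have -> : sigma s = (- 1)%R by apply/eqP; rewrite -addr_eq0 addrC hm1.
  by rewrite opprK mulrDr mulr1 (four_eq0 hx).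
exists (1 + sigma s) => //; apply: S_scaled_sym => //.
by rewrite mulrDl mul1r mulrBr mulr1 sigma_sym // addrA subrK subrr.
Qed.

Lemma nonsym_star_sqr_commute x : star x != x ->
  star x * star x = x * x /\ commute x (star x).
Proof.
move=> hx; have hx' : x != star x by rewrite eq_sym.
have Sx := S_nonsym hx; have E g := anticomm_coef_nonsym g Sx Sx.
have sq : star x * star x = x * x.
  apply/eqP/negPn/negP => ne; move: (E (x * x)).
  rewrite eqxx (inj_eq (mulgI x)) (inj_eq (mulIg x)) (negbTE hx) (negbTE ne).
  by rewrite !addr0 => /eqP; rewrite (negbTE two_neq0).
split=> //; apply/eqP/negPn/negP => ne; move: (E (x * star x)).
rewrite eqxx (inj_eq (mulgI x)) (negbTE hx') sq (inj_eq (mulgI x)) (negbTE hx').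
by rewrite eq_sym (negbTE ne) !add0r !addr0 => /eqP; rewrite (negbTE (sigma_double_neq0 x)).
Qed.

Lemma starE x : star x = cx star x * x. Proof. by rewrite mulgVK. Qed.

(* Below, [u] with [star x = u * x] is c_x; the lemmas are stated for such a [u] so that
   rewriting never unfolds [cx]. *)

Lemma cx_commute x u : star x = u * x -> commute u x.
Proof.
move=> hx; have [-> | u1] := eqVneq u 1; first by rewrite /commute mul1g mulg1.
have nx : star x != x by rewrite hx eqg_mull1.
by have := (nonsym_star_sqr_commute nx).2; rewrite /commute hx mulgA => /mulIg.
Qed.

Lemma cx_sqr x u : star x = u * x -> u * u = 1.
Proof.
move=> hx; have [-> | u1] := eqVneq u 1; first exact: mulg1.
have nx : star x != x by rewrite hx eqg_mull1.
have := (nonsym_star_sqr_commute nx).1.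
rewrite hx -mulgA (mulgA x) -(cx_commute hx) !mulgA.
by move/mulIg/eqP; rewrite eqg_mull1 => /eqP.
Qed.

Lemma cx_inv x u : star x = u * x -> u^-1 = u.
Proof. by move/cx_sqr/mulg1_eq. Qed.

Lemma cx_star x u : star x = u * x -> star u = u.
Proof.
move=> hx; have := starK x; rewrite {1}hx starM hx (cx_commute hx) -mulgA.
by move/eqP; rewrite eqg_mulr1 => /eqP/mulg1_eq <-; rewrite (cx_inv hx).
Qed.

Lemma cx_sym_cases x u s : star x = u * x -> u != 1 -> star s = s ->
  x * s = s * x \/ u * (x * s) = s * x.
Proof.
move=> hx u1 hs; have nx : star x != x by rewrite hx eqg_mull1.
have [alpha a0 Ss] := sym_scaled_in_S nx hs.
have := anticomm_coef_sym_nonsym (s * x) Ss (S_nonsym nx).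
rewrite hx eqxx (inj_eq (mulgI s)) eqg_mull1 (negbTE u1) /= addr0 mulgA.
have [xs | nxs] := eqVneq (x * s) (s * x); first by left.
have [uxs | nuxs] := eqVneq (u * x * s) (s * x); first by right.
by rewrite !addr0 => a00; rewrite a00 eqxx in a0.
Qed.

Lemma cx_commute_sym x u s : star x = u * x -> star s = s -> commute u s.
Proof.
move=> hx hs; have [-> | u1] := eqVneq u 1; first by rewrite /commute mul1g mulg1.
have nx : star x != x by rewrite hx eqg_mull1.
have [alpha a0 Ss] := sym_scaled_in_S nx hs.
have E := anticomm_coef_sym_nonsym (s * (u * x)) Ss (S_nonsym nx).
have sx_sux : (s * x == s * (u * x)) = false.
  by rewrite (inj_eq (mulgI s)) eq_sym eqg_mull1 (negbTE u1).
have usx_sux : (u * (s * x) == s * (u * x)) = (u * s == s * u).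
  by rewrite !mulgA (inj_eq (mulIg x)).
rewrite /commute; apply/eqP/negPn/negP => /negbTE nus.
suff : (alpha * sigma x)%R = 0 by rewrite mulrC => /sigma_regular a00; rewrite a00 eqxx in a0.
move: E; have [xs | uxs] := cx_sym_cases hx u1 hs.
  by rewrite hx -mulgA xs sx_sux usx_sux nus eqxx /= add0r !addr0.
have xs : x * s = u * (s * x) by rewrite -uxs mulgA (cx_sqr hx) mul1g.
by rewrite hx -mulgA uxs xs sx_sux usx_sux nus eqxx /= add0r !addr0.
Qed.

Lemma commg_sym_cases x u s : star x = u * x -> u != 1 -> star s = s ->
  [~ x, s] = 1 \/ [~ x, s] = u.
Proof.
move=> hx u1 hs; have [xs | uxs] := cx_sym_cases hx u1 hs.
  by left; apply/eqP/commgP.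
right; have u_xs : commute u (x * s).
  exact: commuteM (cx_commute hx) (cx_commute_sym hx hs).
move: (commgC x s); rewrite -uxs u_xs -mulgA => /eqP; rewrite eq_sym eqg_mulr1.
by move=> /eqP/mulg1_eq <-; exact: cx_inv hx.
Qed.

Lemma noncommuting_relations x y u v :
  star x = u * x -> star y = v * y -> ~ commute u y ->
  [/\ u != 1, v != 1, u != v, commute u v & y * u = v * u * y].
Proof.
move=> hx hy nuy.
have u1 : u != 1 by apply: contra_not_neq nuy => ->; rewrite /commute mul1g mulg1.
have v1 : v != 1.
  by apply: contra_not_neq nuy => v1; apply: cx_commute_sym hx _; rewrite hy v1 mul1g.
have uv : u != v by apply: contra_not_neq nuy => ->; exact: cx_commute hy.
have cuv : commute u v := cx_commute_sym hx (cx_star hy).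
split=> //; have [/eqP/commgP/commute_sym // | yu] := commg_sym_cases hy v1 (cx_star hx).
by rewrite commgC yu -mulgA -(cx_commute hy) mulgA cuv.
Qed.

(* The coefficients of [x * y] and [u * (x * y)] in b_x b_y + b_y b_x. *)
Lemma noncommuting_coefs x y u v t :
  star x = u * x -> star y = v * y -> ~ commute u y -> x * y = t * (y * x) ->
  1 + (if t == 1 then 1%R else 0) + (if t == v * u then sigma x else 0)
    + (if t == v then sigma y else 0) + (if t == u then (sigma x * sigma y)%R else 0) = 0
  /\ sigma x + (if t == u then 1%R else 0) + (if t == v then sigma x else 0)
    + (if t == v * u then sigma y else 0) + (if t == 1 then (sigma x * sigma y)%R else 0) = 0.
Proof.
move=> hx hy nuy xyt; have [u1 v1 uv cuv yu] := noncommuting_relations hx hy nuy.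
have nx : star x != x by rewrite hx eqg_mull1.
have ny : star y != y by rewrite hy eqg_mull1.
have uu := cx_sqr hx; have ux := cx_commute hx.
have ht k : (k * (y * x) == x * y) = (t == k) by rewrite xyt (inj_eq (mulIg _)) eq_sym.
have ht1 : (y * x == x * y) = (t == 1) by rewrite -ht mul1g.
have htu k : (k * (y * x) == u * (x * y)) = (t == u * k).
  by rewrite -ht -(inj_eq (mulgI u)) !mulgA uu mul1g.
have ht1u : (y * x == u * (x * y)) = (t == u) by rewrite -[y * x]mul1g htu mulg1.
have E g := anticomm_coef_nonsym g (S_nonsym nx) (S_nonsym ny).
have yux : y * (u * x) = v * u * (y * x) by rewrite mulgA yu -!mulgA.
have vyux : v * y * (u * x) = u * (y * x).
  by rewrite -mulgA yux !mulgA (cx_sqr hy) mul1g.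
have uvu : u * (v * u) = v by rewrite mulgA cuv -mulgA uu mulg1.
have vu1 : v * u != 1 by rewrite mulg_eq1 (cx_inv hx) eq_sym.
have uxy : u * (x * y) = x * (u * y) by rewrite mulgA ux -mulgA.
have ux_vy : u * x * (v * y) = x * (v * u * y) by rewrite ux -mulgA (mulgA u) cuv.
move: (E (x * y)) (E (u * (x * y))).
rewrite hx hy yux vyux ux_vy -[v * y * x]mulgA -[u * x * y]mulgA !ht !htu ht1 ht1u.
rewrite uvu uu cuv eqxx eqg_mull1 (negbTE u1) uxy !(inj_eq (mulgI x)) eqxx.
rewrite !eqg_mull1 !(inj_eq (mulIg y)) eqg_mull1 [y == _]eq_sym eqg_mull1.
rewrite (negbTE u1) (negbTE v1) (negbTE vu1) [v == u]eq_sym (negbTE uv) /= !add0r !addr0.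
by move=> E1 E2; split.
Qed.

Lemma noncommuting_sigma x y u v : star x = u * x -> star y = v * y -> ~ commute u y ->
  [/\ sigma x = (- 1)%R, sigma y = 1%R
    & star (x * y) = x * y \/ star (x * y) = v * (x * y)].
Proof.
move=> hx hy nuy; have [u1 v1 uv cuv yu] := noncommuting_relations hx hy nuy.
have vv := cx_sqr hy.
have [t xyt] : exists t, x * y = t * (y * x) by exists (x * y / (y * x)); rewrite divgK.
have [E1 E2] := noncommuting_coefs hx hy nuy xyt.
have star_xy : star (x * y) = u * (y * x).
  by rewrite starM hy hx -mulgA (mulgA y) yu !mulgA vv mul1g -mulgA.
have vuu : (v * u == u) = false by rewrite eqg_mull1 (negbTE v1).
have vuv : (v * u == v) = false by rewrite eqg_mulr1 (negbTE u1).
have [t1 | nt1] := eqVneq t 1.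
  move: E1; rewrite t1 eqxx ![1 == _]eq_sym mulg_eq1 (cx_inv hx) eq_sym (negbTE uv).
  by rewrite (negbTE u1) (negbTE v1) !addr0 => /eqP; rewrite (negbTE two_neq0).
have [tu | ntu] := eqVneq t u.
  move: E1 E2; rewrite tu eqxx [u == v * u]eq_sym vuu (negbTE uv) (negbTE u1) /=.
  rewrite !addr0 => E1 /eqP; rewrite addr_eq0 => /eqP sx.
  move: E1; rewrite sx mulN1r => /subr0_eq sy; split=> //; left.
  by rewrite star_xy -tu.
have [tvu | ntvu] := eqVneq t (v * u).
  move: E1 E2; rewrite tvu eqxx vuu vuv mulg_eq1 (cx_inv hx) eq_sym (negbTE uv) /=.
  rewrite !addr0 addrC => /eqP; rewrite addr_eq0 => /eqP sx.
  rewrite sx addrC => /subr0_eq sy; split=> //; right.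
  by rewrite star_xy xyt tvu !mulgA vv mul1g.
have [tv | ntv] := eqVneq t v.
  move: E2; rewrite tv eqxx (negbTE v1) [v == u]eq_sym (negbTE uv) [v == _]eq_sym vuv /=.
  by rewrite !addr0 => /eqP; rewrite (negbTE (sigma_double_neq0 x)).
move: E1; rewrite (negbTE nt1) (negbTE ntu) (negbTE ntvu) (negbTE ntv) !addr0 => /eqP.
by rewrite oner_eq0.
Qed.

Lemma cx_central x u : star x = u * x -> in_center u.
Proof.
move=> hx y; have [hy | ny] := eqVneq (star y) y; first exact: cx_commute_sym hx hy.
have [// | /eqP nuy] := eqVneq (u * y) (y * u).
have [sx sy [sym_xy | star_xy]] := noncommuting_sigma hx (starE y) nuy.
  exact: commute_cancel (cx_commute hx) (cx_commute_sym hx sym_xy).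
have nuxy : ~ commute u (x * y) by move/(commute_cancel (cx_commute hx)).
have [_ sxy _] := noncommuting_sigma hx star_xy nuxy.
move: sxy; rewrite sigmaM sx sy mulr1 => /eqP; rewrite eq_sym -addr_eq0.
by rewrite (negbTE two_neq0).
Qed.

Lemma cx_mul x y u v w : star x = u * x -> star y = v * y -> star (x * y) = w * (x * y) ->
  w = u * v * [~ x, y].
Proof.
move=> hx hy hxy; have cu := cx_central hx.
apply: (central_commg (x := x) (y := y) cu (cx_central hy) (cx_central hxy)
          (cx_sqr hx) (cx_sqr hy) (cx_sqr hxy)).
by rewrite -hxy starM hy hx -mulgA (mulgA y) -(cu y) !mulgA (cx_central hy u).
Qed.

Lemma commg_nonsym x y u v : star x = u * x -> star y = v * y ->
  u != 1 -> v != 1 -> u != v -> [~ x, y] \notin [:: 1; u; v] -> star (x * y) = x * y.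
Proof.
move=> hx hy u1 v1 uv; rewrite !inE !negb_or => /and3P[k1 ku kv].
have cu := cx_central hx; have cv := cx_central hy.
have nx : star x != x by rewrite hx eqg_mull1.
have ny : star y != y by rewrite hy eqg_mull1.
have yxm m : (y * x * m == x * y) = (m == [~ x, y]).
  by rewrite [x * y]commgC (inj_eq (mulgI _)).
have star_xy : star (x * y) = y * x * (v * u).
  by rewrite starM hy hx (cu x) (cv y) -mulgA (mulgA v) (cv x) !mulgA.
suff /eqP kvu : [~ x, y] == v * u by rewrite star_xy -kvu -commgC.
apply/negPn/negP => /negbTE kvu.
have := anticomm_coef_nonsym (x * y) (S_nonsym nx) (S_nonsym ny).
rewrite -[star y * star x]starM star_xy yxm hx hy -[y * x]mulg1 !yxm.
have xvy : x * (v * y) = v * (x * y) by rewrite mulgA -(cv x) -mulgA.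
have yux : y * (u * x) = y * x * u by rewrite (cu x) mulgA.
have vyx : v * y * x = y * x * v by rewrite (cv y) -mulgA (cv x) mulgA.
rewrite -[u * x * (v * y)]mulgA xvy yux vyx -[u * x * y]mulgA [u * (v * _)]mulgA.
rewrite !yxm !eqg_mull1 mulg_eq1 (cx_inv hy) ![_ == [~ x, y]]eq_sym eqxx.
rewrite (negbTE u1) (negbTE v1) (negbTE uv) (negbTE k1) (negbTE ku) (negbTE kv) kvu /=.
by rewrite !addr0 => /eqP; rewrite oner_eq0.
Qed.

Lemma commg_cases x y u v : star x = u * x -> star y = v * y -> [~ x, y] != 1 ->
  [~ x, y] = u \/ [~ x, y] = v \/ u = v.
Proof.
move=> hx hy k1; have [u1 | u1] := eqVneq u 1.
  have sx : star x = x by rewrite hx u1 mul1g.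
  have [v1 | v1] := eqVneq v 1; first by right; right; rewrite u1 v1.
  right; left; have [|] := commg_sym_cases hy v1 sx; rewrite -invgR.
    by move/eqP; rewrite invg_eq1 (negbTE k1).
  by move=> kv; rewrite -[LHS]invgK kv (cx_inv hy).
have [v1 | v1] := eqVneq v 1.
  have sy : star y = y by rewrite hy v1 mul1g.
  by have [/eqP|] := commg_sym_cases hx u1 sy; [rewrite (negbTE k1) | left].
have [ku | ku] := eqVneq [~ x, y] u; first by left.
have [kv | kv] := eqVneq [~ x, y] v; first by right; left.
have [// | uv] := eqVneq u v; first by right; right.
have sym_xy : star (x * y) = x * y.
  by apply: (commg_nonsym hx hy) => //; rewrite !inE !negb_or k1 ku kv.
have [] := commg_sym_cases hx u1 sym_xy; rewrite commg_self_mul => /eqP.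
  by rewrite (negbTE k1).
by rewrite (negbTE ku).
Qed.

Lemma cx_mul_cases x y u v w :
  star x = u * x -> star y = v * y -> star (x * y) = w * (x * y) -> [~ x, y] != 1 ->
  w = u \/ w = v \/ w = [~ x, y].
Proof.
move=> hx hy hxy k1; rewrite (cx_mul hx hy hxy).
have uu := cx_sqr hx; have vv := cx_sqr hy.
have [-> | [-> | ->]] := commg_cases hx hy k1.
- by right; left; rewrite (cx_central hx v) -mulgA uu mulg1.
- by left; rewrite -mulgA vv mulg1.
- by right; right; rewrite vv mul1g.
Qed.

End AnticommutativeSymmetricElements.

Theorem lemma3p12 (R : comNzRingType) (G : groupType)
    (star : G -> G) (sigma : G -> R)
    (char_not2 : (2%:R%R : R) != 0%R)
    (Hstar : is_group_involution star)
    (Hsigma : is_unit_hom sigma)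
    (Hnontriv : exists x : G, sigma x != 1%R)
    (Hcompat : forall x : G, sigma (x * star x)%g = 1%R)
    (Hanti : S_anticommutative star sigma) :
  (forall x : G,
      star x = (cx star x * x)%g /\ star (cx star x) = cx star x /\
      in_center (cx star x) /\ (cx star x * cx star x)%g = 1%g) /\
  (forall x y : G, cx star (x * y)%g = (cx star x * cx star y * [~ x, y])%g) /\
  (forall x y : G, [~ x, y]%g <> 1%g ->
      cx star (x * y)%g = cx star x \/ cx star (x * y)%g = cx star y \/
      cx star (x * y)%g = [~ x, y]%g).
Proof.
(* [Hnontriv] is one of the paper's standing assumptions; this lemma does not need it. *)
split; [|split] => [x | x y | x y /eqP k1].
- have hx := starE star x; do !split => //.
  + exact: (cx_star char_not2 Hstar Hsigma Hanti hx).
  + exact: (cx_central char_not2 Hstar Hsigma Hcompat Hanti hx).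
  + exact: (cx_sqr char_not2 Hsigma Hanti hx).
- exact: (cx_mul char_not2 Hstar Hsigma Hcompat Hanti
           (starE _ _) (starE _ _) (starE _ _)).
- exact: (cx_mul_cases char_not2 Hstar Hsigma Hcompat Hanti
           (starE _ _) (starE _ _) (starE _ _) k1).
Qed.
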